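(* Let $r \in \mathbb{Q}_{>0}$ be such that $S_r$ is atomic. (1) If $r < 1$, then for every $x \in S_r$ with $|\mathsf{Z}(x)| > 1$, $\mathsf{L}(x) = \{\min \mathsf{L}(x) + k(\mathsf{d}(r) - \mathsf{n}(r)) : k \in \mathbb{N}_0\}$. (2) If $r \in \mathbb{N}$, then $|\mathsf{Z}(x)| = |\mathsf{L}(x)| = 1$ for all $x \in S_r$. (3) If $r \in \mathbb{Q}_{>1} \setminus \mathbb{N}$, then for every $x \in S_r$ with $|\mathsf{Z}(x)| > 1$, $\mathsf{L}(x) = \{\min \mathsf{L}(x) + k(\mathsf{n}(r) - \mathsf{d}(r)) : 0 \le k \le \frac{\max \mathsf{L}(x) - \min \mathsf{L}(x)}{\mathsf{n}(r) - \mathsf{d}(r)}\}$. In particular, for every $x \in S_r$, $\mathsf{L}(x)$ is an arithmetic progression with difference $|\mathsf{n}(r) - \mathsf{d}(r)|$.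
   Context: For $q \in \mathbb{Q}_{>0}$, $\mathsf{n}(q)$ and $\mathsf{d}(q)$ denote the unique positive coprime integers with $q = \mathsf{n}(q)/\mathsf{d}(q)$. For $r \in \mathbb{Q}_{>0}$, $S_r$ is the additive submonoid of $(\mathbb{Q}_{\ge 0},+)$ generated by $\{r^n : n \in \mathbb{N}_0\}$; it is atomic exactly when $r=1$ or $\mathsf{n}(r)>1$. If $r \in \mathbb{N}$ then $S_r = \mathbb{N}_0$ with unique atom $1$; if $r \notin \mathbb{N}$ and $S_r$ is atomic, its atoms are the pairwise distinct elements $r^n$, $n \in \mathbb{N}_0$. A factorization of $x$ is a formal finite sum of atoms (with multiplicities) whose value is $x$; $\mathsf{Z}(x)$ is the set of factorizations of $x$, $|z|$ is the number of atoms in $z$ counted with multiplicity, and $\mathsf{L}(x) = \{|z| : z \in \mathsf{Z}(x)\}$. *)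

From HB Require Import structures.
From mathcomp Require Import all_boot all_order all_algebra.
Set Implicit Arguments. Unset Strict Implicit. Unset Printing Implicit Defensive.
Import Order.TTheory GRing.Theory Num.Theory.
Local Open Scope ring_scope.

Definition nq (q : rat) : nat := `|numq q|%N.
Definition dq (q : rat) : nat := `|denq q|%N.

Definition inSr (r x : rat) : Prop :=
  exists s : seq nat, x = \sum_(i <- s) r ^+ i.

Definition is_atom (r a : rat) : Prop :=
  inSr r a /\ a != 0 /\
  forall b c, inSr r b -> inSr r c -> a = b + c -> b = 0 \/ c = 0.

Definition atomic (r : rat) : Prop :=
  forall x, inSr r x -> x != 0 ->
    exists z : seq rat, (forall a, a \in z -> is_atom r a) /\ \sum_(a <- z) a = x.

(* a factorization of x: a formal finite sum of atoms (a multiset of atoms,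
   represented by a list; two lists denote the same factorization iff they
   are permutations of each other) whose value is x *)
Definition is_fact (r x : rat) (z : seq rat) : Prop :=
  (forall a, a \in z -> is_atom r a) /\ \sum_(a <- z) a = x.

Definition Z_gt1 (r x : rat) : Prop :=
  exists z1 z2, is_fact r x z1 /\ is_fact r x z2 /\ ~~ perm_eq z1 z2.

Definition Z_eq1 (r x : rat) : Prop :=
  (exists z, is_fact r x z) /\
  forall z1 z2, is_fact r x z1 -> is_fact r x z2 -> perm_eq z1 z2.

Definition Lset (r x : rat) (l : nat) : Prop :=
  exists z, is_fact r x z /\ size z = l.

Definition is_minL (r x : rat) (m : nat) : Prop :=
  Lset r x m /\ forall l, Lset r x l -> (m <= l)%N.
Definition is_maxL (r x : rat) (M : nat) : Prop :=
  Lset r x M /\ forall l, Lset r x l -> (l <= M)%N.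

Definition is_AP (L : nat -> Prop) (q : nat) : Prop :=
  exists a,
    (exists N, forall l, L l <-> exists k, (k <= N)%N /\ l = (a + k * q)%N) \/
    (forall l, L l <-> exists k, l = (a + k * q)%N).

From HB Require Import structures.
From mathcomp Require Import all_boot all_order all_algebra.
From mathcomp Require Import zify.
From Stdlib Require Import Classical.
Set Implicit Arguments. Unset Strict Implicit. Unset Printing Implicit Defensive.
Import Order.TTheory GRing.Theory Num.Theory.

(* An element of S_r is written [powsum r s] for
   a list [s] of exponents; the basic relation is the trade
   d * r ^+ i.+1 = n * r ^+ i, which changes the number of summands by n - d.
   - Digit uniqueness: clearing denominators turns [powsum r s] into an
     integer whose mixed-radix digits are the multiplicities in [s]; hence a
     list with fewer than d copies of each positive exponent (down-reduced),
     or fewer than n copies of each exponent (up-reduced), is determined up to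
     order by its value.
   - Trading as long as possible reaches these normal forms
     ([down_reduce], [up_reduce]); when n <= d, n equal exponents allow an
     endless chain of up-trades ([up_chain]).
   - Consequently, for r < 1 the representation lengths of x are
     |c| + t (d - n) with c the down-reduced form, all realized when x has two
     representations; for r > 1 they fill the interval from the up-reduced form
     to its down-reduction ([rep_lengths_down], [rep_lengths_up]).
   - When 1 < n, d the atoms of S_r are exactly the powers of r, so
     factorizations are exponent lists up to order (for r < 1 atomicity forces
     1 < n); for integral r the only atom is 1.
   The theorem collects parts (1)-(3) and the arithmetic-progression corollary. *)

Lemma coprime_digit_cancel d u a b X Y : coprime d u -> a < d -> b < d ->
  a * u + d * X = b * u + d * Y -> a = b.
Proof.
wlog le_ba : a b X Y / b <= a.
  move=> W du ad bd e; case: (leqP b a) => [ba|ab]; first exact: W e.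
  by apply/esym/(W b a Y X) => //; apply: ltnW.
move=> du ad bd e.
have d_dvd : d %| (a - b) * u.
  have bu_au : b * u <= a * u by rewrite leq_mul2r le_ba orbT.
  have e' : (a - b) * u + d * X = d * Y by rewrite mulnBl; lia.
  by rewrite -(dvdn_addr _ (dvdn_mulr X (dvdnn d))) addnC e' dvdn_mulr.
rewrite Gauss_dvdl // in d_dvd.
have [ab0 | ab_gt0] := posnP (a - b); first lia.
by have := dvdn_leq ab_gt0 d_dvd; lia.
Qed.

Lemma digits_unique n d K (c1 c2 : nat -> nat) : coprime d n ->
  (forall j, 0 < j -> c1 j < d) -> (forall j, 0 < j -> c2 j < d) ->
  \sum_(j < K.+1) c1 j * (n ^ j * d ^ (K - j)) =
  \sum_(j < K.+1) c2 j * (n ^ j * d ^ (K - j)) ->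
  forall j, j <= K -> c1 j = c2 j.
Proof.
move=> dn c1d c2d; elim: K => [|K IH].
  by rewrite !big_ord1 subnn !muln1 => e j; rewrite leqn0 => /eqP ->.
have split_top (c : nat -> nat) : \sum_(j < K.+2) c j * (n ^ j * d ^ (K.+1 - j)) =
    c K.+1 * n ^ K.+1 + d * \sum_(j < K.+1) c j * (n ^ j * d ^ (K - j)).
  rewrite big_ord_recr /= subnn muln1 addnC big_distrr; congr (_ + _).
  apply: eq_bigr => j _; rewrite subSn; last by rewrite -ltnS.
  by rewrite expnS [n ^ j * _]mulnCA mulnCA.
rewrite !split_top => e.
have top : c1 K.+1 = c2 K.+1.
  exact: coprime_digit_cancel (coprimeXr _ dn) (c1d K.+1 isT) (c2d K.+1 isT) e.
have d_gt0 : 0 < d by apply: leq_ltn_trans (c1d 1 isT).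
move: e; rewrite top => /addnI /eqP; rewrite eqn_mul2l gtn_eqF //= => /eqP /IH low j.
by rewrite leq_eqVlt => /orP [/eqP -> // | /low].
Qed.

(* The same uniqueness with the roles of [n] and [d] exchanged: reverse the
   order of the digits. *)
Lemma digits_unique_rev n d K (c1 c2 : nat -> nat) : coprime n d ->
  (forall j, c1 j < n) -> (forall j, c2 j < n) ->
  \sum_(j < K.+1) c1 j * (n ^ j * d ^ (K - j)) =
  \sum_(j < K.+1) c2 j * (n ^ j * d ^ (K - j)) ->
  forall j, j <= K -> c1 j = c2 j.
Proof.
move=> nd c1n c2n e j jK.
have rev (c : nat -> nat) : \sum_(j < K.+1) c j * (n ^ j * d ^ (K - j)) =
    \sum_(j < K.+1) c (K - j) * (d ^ j * n ^ (K - j)).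
  rewrite (reindex_inj rev_ord_inj) /=; apply: eq_bigr => i _.
  by rewrite subSS subKn 1?[n ^ _ * _]mulnC // -ltnS.
have := @digits_unique d n K (fun j => c1 (K - j)) (fun j => c2 (K - j)) nd.
move=> /(_ (fun _ _ => c1n _) (fun _ _ => c2n _)); rewrite -!rev => /(_ e (K - j)).
by rewrite subKn // => /(_ (leq_subr j K)).
Qed.

Lemma sum_by_count (F : nat -> nat) K (s : seq nat) : all (fun i => i <= K) s ->
  \sum_(i <- s) F i = \sum_(j < K.+1) count_mem (j : nat) s * F j.
Proof.
elim: s => [_|a s IH /andP [aK sK]]; first by rewrite big_nil big1.
rewrite big_cons IH //=; under [RHS]eq_bigr do rewrite mulnDl.
rewrite big_split /=; congr (_ + _).
rewrite (bigD1 (Ordinal (aK : a < K.+1))) //= eqxx mul1n big1 ?addn0 // => j.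
by rewrite -val_eqE /= eq_sym => /negbTE ->.
Qed.

Lemma extract_copies (x k : nat) (s : seq nat) :
  k <= count_mem x s -> exists t : seq nat, perm_eq s (nseq k x ++ t).
Proof.
elim: k s => [|k IH] s ks; first by exists s.
have xs : x \in s by rewrite -has_pred1 has_count; lia.
have [t rem_t] : exists t, perm_eq (rem x s) (nseq k x ++ t).
  by apply: IH; rewrite count_mem_rem eqxx; lia.
by exists t; apply: perm_trans (perm_to_rem xs) _; rewrite /= perm_cons.
Qed.

(* [perm_size] at type [seq nat], so that the lengths it equates are
   syntactically those of the exponent lists (as arithmetic solvers need). *)
Lemma perm_size_exps (s1 s2 : seq nat) : perm_eq s1 s2 -> size s1 = size s2.
Proof. exact: perm_size. Qed.

Lemma count_perm (s1 s2 : seq nat) :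
  (forall x, count_mem x s1 = count_mem x s2) -> perm_eq s1 s2.
Proof. by move=> e; apply/allP => x _ /=; rewrite e. Qed.

Lemma sumn_nseq (F : nat -> nat) k j : \sum_(i <- nseq k j) F i = k * F j.
Proof. by rewrite big_nseq iter_addn_0 mulnC. Qed.

Local Open Scope ring_scope.

Lemma sumr_nseq (I : Type) (F : I -> rat) k (j : I) :
  \sum_(i <- nseq k j) F i = k%:R * F j.
Proof. by rewrite big_nseq mulr_natl; elim: k => [|k /= ->]; rewrite ?mulr0n ?mulrS. Qed.

Definition powsum (r : rat) (s : seq nat) : rat := \sum_(i <- s) r ^+ i.

Lemma powsum_perm r s1 s2 : perm_eq s1 s2 -> powsum r s1 = powsum r s2.
Proof. exact: perm_big. Qed.

(* [down_reduced d s]: no exponent [i.+1] occurs [d] times in [s], so no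
   down-trade [d * r ^+ i.+1 -> n * r ^+ i] applies to [s]. *)
Definition down_reduced (d : nat) (s : seq nat) : Prop :=
  forall i, (count_mem i.+1 s < d)%N.

(* [up_reduced n s]: no exponent occurs [n] times in [s], so no up-trade
   [n * r ^+ i -> d * r ^+ i.+1] applies to [s]. *)
Definition up_reduced (n : nat) (s : seq nat) : Prop :=
  forall i, (count_mem i s < n)%N.

Definition rep_length (r x : rat) (l : nat) : Prop :=
  exists s, powsum r s = x /\ size s = l.

Section Trades.
Variables (n d : nat) (r : rat).
Hypothesis r_nd : r * d%:R = n%:R.

Lemma powsum_trade i t : powsum r (nseq d i.+1 ++ t) = powsum r (nseq n i ++ t).
Proof.
by rewrite /powsum !big_cat /= !sumr_nseq exprS mulrA [_ * r]mulrC r_nd.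
Qed.

(* Performing down-trades as long as possible terminates (the weight
   [\sum_(i <- s) n.+1 ^ i] decreases) in a down-reduced list [s'] after [t]
   trades; all intermediate lengths are lengths of representations of the same
   element, and if some trade was done then the last one left [n] equal
   exponents in [s']. *)
Lemma down_reduce (s : seq nat) : (0 < d)%N ->
  exists t s', [/\ down_reduced d s', powsum r s' = powsum r s,
    (size s' + t * d = size s + t * n)%N,
    (forall k, k <= t -> exists u, powsum r u = powsum r s /\ size u + k * d = size s + k * n)%N
    & s' = s \/ exists i, (n <= count_mem i s')%N].
Proof.
move=> d_gt0; have [N] := ubnP (\sum_(i <- s) n.+1 ^ i)%N.
elim: N s => // N IH s weight_s.
pose tradable j := ((0 < j) && (d <= count_mem j s))%N.
have [/hasP [[//|i] _ /andP [_ di]] | no_trade] := boolP (has tradable s); last first.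
  exists 0%N, s; split=> //; last by left.
  - move=> i; rewrite ltnNge; apply: contra no_trade => di; apply/hasP; exists i.+1 => //.
    by rewrite -has_pred1 has_count; apply: leq_trans di.
  - by move=> k; rewrite leqn0 => /eqP ->; exists s.
have [t0 s_t0] := extract_copies di.
set s1 := nseq n i ++ t0.
have val_s1 : powsum r s1 = powsum r s by rewrite -powsum_trade -(powsum_perm _ s_t0).
have size_s1 : (size s1 + d = size s + n)%N.
  by rewrite /s1 (perm_size_exps s_t0) !size_cat !size_nseq; lia.
have weight_s1 : (\sum_(i <- s1) n.+1 ^ i < \sum_(i <- s) n.+1 ^ i)%N.
  rewrite (perm_big _ s_t0) !big_cat /= !sumn_nseq ltn_add2r expnS.
  have := expn_gt0 n.+1 i; nia.
have [t [s' [red val_s' size_s' mid last_s']]] := IH s1 (leq_trans weight_s1 weight_s).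
exists t.+1, s'; split=> //; first by rewrite val_s'.
- by nia.
- case=> [|k] kt; first by exists s.
  have [u [val_u size_u]] := mid k kt.
  by exists u; split; [rewrite val_u | nia].
- right; case: last_s' => [-> | //]; exists i.
  by rewrite count_cat count_nseq /= eqxx mul1n leq_addr.
Qed.

(* Performing up-trades as long as possible terminates when [d < n] (each one
   shortens the list by [n - d]) in an up-reduced list. *)
Lemma up_reduce (s : seq nat) : (d < n)%N ->
  exists t s', [/\ up_reduced n s', powsum r s' = powsum r s
                 & (size s' + t * n = size s + t * d)%N].
Proof.
move=> lt_dn; have [N] := ubnP (size s); elim: N s => // N IH s size_s.
have [/hasP [i _ ni] | no_trade] := boolP (has (fun i => n <= count_mem i s)%N s); last first.
  exists 0%N, s; split=> // i; rewrite ltnNge; apply: contra no_trade => ni.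
  apply/hasP; exists i => //; rewrite -has_pred1 has_count.
  by apply: leq_trans ni; apply: leq_ltn_trans lt_dn.
have [t0 s_t0] := extract_copies ni.
set s1 := nseq d i.+1 ++ t0.
have val_s1 : powsum r s1 = powsum r s by rewrite powsum_trade -(powsum_perm _ s_t0).
have size_s1 : (size s1 + n = size s + d)%N.
  by rewrite /s1 (perm_size_exps s_t0) !size_cat !size_nseq; lia.
have [|t [s' [red val_s' size_s']]] := IH s1; first by lia.
by exists t.+1, s'; split=> //; [rewrite val_s' | nia].
Qed.

(* When [n <= d], a list with [n] equal exponents admits an unbounded chain of
   up-trades, each lengthening it by [d - n]: a trade [n * r ^+ j -> d * r ^+ j.+1]
   produces [d >= n] copies of [j.+1], so another trade is possible. *)
Lemma up_chain (s : seq nat) (i : nat) : (n <= d)%N -> (n <= count_mem i s)%N ->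
  forall k, exists u, powsum r u = powsum r s /\ (size u + k * n = size s + k * d)%N.
Proof.
move=> le_nd ni k.
suff [u [val_u size_u _]] : exists u, [/\ powsum r u = powsum r s,
    (size u + k * n = size s + k * d)%N & exists j, (n <= count_mem j u)%N] by exists u.
elim: k => [|k [u [val_u size_u [j nj]]]]; first by exists s; split=> //; exists i.
have [t0 u_t0] := extract_copies nj.
have size_u_t0 : size u = (n + size t0)%N by rewrite (perm_size u_t0) size_cat size_nseq.
exists (nseq d j.+1 ++ t0); split.
- by rewrite powsum_trade -(powsum_perm _ u_t0).
- by rewrite size_cat size_nseq; nia.
- exists j.+1; apply: leq_trans le_nd _.
  by rewrite count_cat count_nseq /= eqxx mul1n leq_addr.
Qed.

(* Clearing denominators: for exponents at most [K], [powsum r s * d ^ K] is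
   the integer whose mixed-radix digits are the multiplicities in [s]. *)
Lemma powsum_scaled K (s : seq nat) : all (fun i => i <= K)%N s ->
  powsum r s * (d ^ K)%N%:R =
  (\sum_(j < K.+1) count_mem (j : nat) s * (n ^ j * d ^ (K - j)))%N%:R.
Proof.
move=> sK; rewrite -(sum_by_count (fun j => n ^ j * d ^ (K - j))%N sK).
rewrite natr_sum /powsum mulr_suml.
apply: eq_big_seq => i /(allP sK) iK.
by rewrite -{1}(subnKC iK) expnD natrM mulrA natrX -exprMn r_nd -!natrX -natrM.
Qed.

Lemma perm_of_digits (s1 s2 : seq nat) :
  (forall K (c1 c2 : nat -> nat),
     (forall j, c1 j = count_mem j s1) -> (forall j, c2 j = count_mem j s2) ->
     \sum_(j < K.+1) c1 j * (n ^ j * d ^ (K - j)) =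
     \sum_(j < K.+1) c2 j * (n ^ j * d ^ (K - j)) ->
     forall j, j <= K -> c1 j = c2 j)%N ->
  powsum r s1 = powsum r s2 -> perm_eq s1 s2.
Proof.
move=> digits_inj e; set K := (\max_(i <- s1 ++ s2) i)%N.
have below i : i \in s1 ++ s2 -> (i <= K)%N.
  by move=> i_in; exact: (@leq_bigmax_seq _ _ xpredT id i i_in isT).
have s1K : all (fun i => i <= K)%N s1.
  by apply/allP => i i1; apply: below; rewrite mem_cat i1.
have s2K : all (fun i => i <= K)%N s2.
  by apply/allP => i i2; apply: below; rewrite mem_cat i2 orbT.
have := powsum_scaled s2K; rewrite -e (powsum_scaled s1K) => /eqP.
rewrite eqr_nat => /eqP dig.
apply: count_perm => j; have [jK | Kj] := leqP j K.
  exact: digits_inj _ _ _ (fun _ => erefl) (fun _ => erefl) dig j jK.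
have outside s : (j \notin s) -> count_mem j s = 0%N by move/count_memPn.
rewrite !outside //; apply: contraTN Kj => j_in; rewrite -leqNgt below //.
  by rewrite mem_cat j_in orbT.
by rewrite mem_cat j_in.
Qed.

Lemma down_reduced_unique (s1 s2 : seq nat) : coprime d n ->
  down_reduced d s1 -> down_reduced d s2 -> powsum r s1 = powsum r s2 -> perm_eq s1 s2.
Proof.
move=> dn red1 red2; apply: perm_of_digits => K c1 c2 e1 e2.
by apply: digits_unique dn _ _ => [[] // j _ | [] // j _]; rewrite ?e1 ?e2.
Qed.

Lemma up_reduced_unique (s1 s2 : seq nat) : coprime n d ->
  up_reduced n s1 -> up_reduced n s2 -> powsum r s1 = powsum r s2 -> perm_eq s1 s2.
Proof.
move=> nd red1 red2; apply: perm_of_digits => K c1 c2 e1 e2.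
by apply: digits_unique_rev nd _ _ => j; rewrite ?e1 ?e2.
Qed.

(* If [1 < n] and [1 < d], the only representation of a power [r ^+ i] is
   [r ^+ i] itself: its down-reduction must be [[:: i]], which has no [n]
   equal exponents, so no down-trade can have been performed. *)
Lemma powsum_eq_pow (s : seq nat) (i : nat) :
  (1 < n)%N -> (1 < d)%N -> coprime d n -> powsum r s = r ^+ i -> perm_eq s [:: i].
Proof.
move=> n_gt1 d_gt1 dn val_s.
have [t [s' [red val_s' _ _ last_s']]] := down_reduce s (ltnW d_gt1).
have single_red : down_reduced d [:: i].
  by move=> j; apply: leq_ltn_trans d_gt1; rewrite /= ?addn0 leq_b1.
have s'_i : perm_eq s' [:: i].
  by apply: down_reduced_unique; rewrite // val_s' val_s /powsum big_seq1.
case: last_s' => [<- // | [j]]; rewrite (permP s'_i) /= ?addn0 => nj.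
by have := leq_trans nj (leq_b1 (i == j)); rewrite leqNgt n_gt1.
Qed.

(* [r < 1]: all representations of [x] share one down-reduction [c]; their
   lengths are [size c + t * (d - n)], and if [x] has two distinct
   representations then [c] contains [n] equal exponents, so [up_chain]
   realizes every such length. *)
Lemma rep_lengths_down x (s1 s2 : seq nat) : (n < d)%N -> coprime d n ->
  powsum r s1 = x -> powsum r s2 = x -> ~~ perm_eq s1 s2 ->
  exists m, forall l, rep_length r x l <-> exists k, l = (m + k * (d - n))%N.
Proof.
move=> lt_nd dn val1 val2 s1_s2; have d_gt0 : (0 < d)%N by apply: leq_ltn_trans lt_nd.
have [t1 [c1 [red1 val_c1 _ _ last1]]] := down_reduce s1 d_gt0.
have [t2 [c2 [red2 val_c2 _ _ last2]]] := down_reduce s2 d_gt0.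
have c1_c2 : perm_eq c1 c2 by apply: down_reduced_unique; rewrite // val_c1 val_c2 val1.
have [i ni] : exists i, (n <= count_mem i c1)%N.
  case: last1 => [c1_s1 | //]; case: last2 => [c2_s2 | [i ni]].
    by move: s1_s2; rewrite -c1_s1 -c2_s2 c1_c2.
  by exists i; rewrite (permP c1_c2).
exists (size c1) => l; split.
  move=> [s [val_s <-]].
  have [t [c [red val_c size_c _ _]]] := down_reduce s d_gt0.
  have c_c1 : perm_eq c c1 by apply: down_reduced_unique; rewrite // val_c val_s val_c1.
  by exists t; move: size_c; rewrite (perm_size_exps c_c1); nia.
move=> [k ->]; have [u [val_u size_u]] := up_chain (ltnW lt_nd) ni k.
by exists u; split; [rewrite val_u val_c1 | nia].
Qed.

(* [1 < r]: the up-reduction [b] (shortest) and the down-reduction [a] of [b]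
   (longest) are unique; every representation [s] of length
   [size b + t * (n - d)] sits [t] up-trades above [b] and [t'] down-trades
   below [a], with [t + t'] the number [T] of trades from [b] to [a]. *)
Lemma rep_lengths_up x (s0 : seq nat) :
  (d < n)%N -> (0 < d)%N -> coprime n d -> powsum r s0 = x ->
  exists m T, forall l, rep_length r x l <-> exists k, (k <= T)%N /\ l = (m + k * (n - d))%N.
Proof.
move=> lt_dn d_gt0 nd val_s0; have dn : coprime d n by rewrite coprime_sym.
have [t0 [b [redb val_b _]]] := up_reduce s0 lt_dn.
have [T [a [reda val_a size_a mid _]]] := down_reduce b d_gt0.
exists (size b), T => l; split.
  move=> [s [val_s <-]].
  have [t [c [red val_c size_c]]] := up_reduce s lt_dn.
  have c_b : perm_eq c b by apply: up_reduced_unique; rewrite // val_c val_s val_b.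
  have [t' [c' [red' val_c' size_c' _ _]]] := down_reduce s d_gt0.
  have c'_a : perm_eq c' a by apply: down_reduced_unique; rewrite // val_c' val_a val_b val_s.
  move: size_c size_c'; rewrite (perm_size_exps c_b) (perm_size_exps c'_a) => size_c size_c'.
  have T_tt' : T = (t + t')%N.
    by apply/eqP; rewrite -(eqn_pmul2r (_ : 0 < n - d)%N) ?subn_gt0 //; apply/eqP; nia.
  by exists t; split; [rewrite T_tt' leq_addr | nia].
move=> [k [kT ->]]; have [u [val_u size_u]] := mid k kT.
by exists u; split; [rewrite val_u val_b | nia].
Qed.

End Trades.

Lemma num_den_spec (r : rat) : 0 < r ->
  [/\ (0 < nq r)%N, (0 < dq r)%N, coprime (nq r) (dq r) & r * (dq r)%:R = (nq r)%:R].
Proof.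
move=> r_gt0; have num_gt0 : 0 < numq r by rewrite numq_gt0.
rewrite /nq /dq !absz_gt0 gt_eqF // gt_eqF ?denq_gt0 //; split=> //.
  exact: coprime_num_den.
rewrite !natr_absz !gtr0_norm ?denq_gt0 // -{1}(divq_num_den r) mulfVK //.
by rewrite intr_eq0 denq_neq0.
Qed.

Lemma inSr_powsum r s : inSr r (powsum r s).
Proof. by exists s. Qed.

Lemma inSr_pow r i : inSr r (r ^+ i).
Proof. by exists [:: i]; rewrite big_seq1. Qed.

Lemma inSr_nat r (N : nat) : inSr r N%:R.
Proof. by exists (nseq N 0%N); rewrite sumr_nseq expr0 mulr1. Qed.

Lemma powsum_gt0 r s : 0 < r -> s != [::] -> 0 < powsum r s.
Proof.
move=> r_gt0; case: s => [//|i s] _; rewrite /powsum big_cons ltr_wpDr ?exprn_gt0 //.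
by apply: sumr_ge0 => j _; rewrite exprn_ge0 // ltW.
Qed.

(* Every atom of [S_r] is a power of [r]: a sum of two or more powers splits. *)
Lemma atom_is_pow r a : 0 < r -> is_atom r a -> exists i, a = r ^+ i.
Proof.
move=> r_gt0 [[[|i [|j s]] ->] [a_neq0 irreducible]]; first by rewrite big_nil eqxx in a_neq0.
  by exists i; rewrite big_seq1.
have [pow0 | rest0] := irreducible (r ^+ i) (powsum r (j :: s)) (inSr_pow r i)
  (inSr_powsum r (j :: s)) (big_cons _ _ _ _ _ _).
  by move: (exprn_gt0 i r_gt0); rewrite pow0 ltxx.
by move: (@powsum_gt0 r (j :: s) r_gt0 isT); rewrite rest0 ltxx.
Qed.

Lemma atoms_are_powers r : 0 < r -> (1 < nq r)%N -> (1 < dq r)%N ->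
  forall a, is_atom r a <-> exists i, a = r ^+ i.
Proof.
move=> r_gt0 n_gt1 d_gt1 a; split; first exact: atom_is_pow.
have [_ _ nd r_nd] := num_den_spec r_gt0.
move=> [i ->]; split; first exact: inSr_pow.
split=> [|_ _ [s1 ->] [s2 ->] e]; first by rewrite gt_eqF ?exprn_gt0.
have : perm_eq (s1 ++ s2) [:: i].
  by apply: (powsum_eq_pow r_nd n_gt1 d_gt1); rewrite 1?coprime_sym // /powsum big_cat e.
move/perm_size; rewrite size_cat /=; clear e => size_1.
case: s1 size_1 => [|? s1] size_1; first by left; rewrite big_nil.
case: s2 size_1 => [|? s2] size_1; first by right; rewrite big_nil.
by rewrite /= addnS in size_1.
Qed.

Lemma pow_list_exps r (z : seq rat) : (forall a, a \in z -> exists i, a = r ^+ i) ->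
  exists s, z = map (fun i => r ^+ i) s.
Proof.
elim: z => [_ | a z IH z_pow]; first by exists [::].
have [i ->] := z_pow a (mem_head a z).
have [|s ->] := IH; first by move=> b b_z; apply: z_pow; rewrite inE b_z orbT.
by exists (i :: s).
Qed.

Section PowerAtoms.
Variable r : rat.
Hypothesis atoms_pow : forall a, is_atom r a <-> exists i, a = r ^+ i.

Lemma fact_exps x z :
  is_fact r x z <-> exists s, z = map (fun i => r ^+ i) s /\ powsum r s = x.
Proof.
split=> [[z_atoms z_x] | [s [-> s_x]]].
  have [s z_s] := pow_list_exps (fun a a_z => proj1 (atoms_pow a) (z_atoms a a_z)).
  by exists s; split=> //; rewrite -z_x z_s big_map.
split; last by rewrite big_map.
by move=> a /mapP [i _ ->]; apply/atoms_pow; exists i.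
Qed.

Lemma Lset_rep_length x l : Lset r x l <-> rep_length r x l.
Proof.
split=> [[z [/fact_exps [s [-> s_x]] <-]] | [s [s_x <-]]].
  by exists s; rewrite size_map.
by exists (map (fun i => r ^+ i) s); rewrite size_map; split=> //; apply/fact_exps; exists s.
Qed.

Lemma Zgt1_exps x : Z_gt1 r x ->
  exists s1 s2, [/\ powsum r s1 = x, powsum r s2 = x & ~~ perm_eq s1 s2].
Proof.
move=> [z1 [z2 [/fact_exps [s1 [-> s1_x]] [/fact_exps [s2 [-> s2_x]] z1_z2]]]].
by exists s1, s2; split=> //; apply: contra z1_z2; apply: perm_map.
Qed.

End PowerAtoms.

Lemma sum_nat_pows (k : nat) (s : seq nat) :
  \sum_(i <- s) (k%:R : rat) ^+ i = (\sum_(i <- s) k ^ i)%N%:R.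
Proof. by rewrite natr_sum; apply: eq_bigr => i _; rewrite natrX. Qed.

Lemma nat_atoms (k : nat) a : is_atom k%:R a <-> a = 1.
Proof.
split=> [[[s ->] [a_neq0 irreducible]] | ->].
  move: a_neq0 irreducible; rewrite sum_nat_pows; set N := (\sum_(i <- s) k ^ i)%N.
  move=> N_neq0 irreducible; have N_gt0 : (0 < N)%N by rewrite lt0n -(eqr_nat rat).
  have [] := irreducible 1 N.-1%:R (inSr_nat _ 1) (inSr_nat _ _).
  - by rewrite -{1}(prednK N_gt0) -natr1 addrC.
  - by move/eqP; rewrite oner_eq0.
  - by move/eqP; rewrite pnatr_eq0 -subn1 subn_eq0 => N_le1; have -> : N = 1%N by lia.
split; first exact: inSr_nat _ 1.
split=> [|_ _ [s1 ->] [s2 ->]]; first exact: oner_neq0.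
rewrite !sum_nat_pows -natrD (_ : 1 = 1%:R) // => /eqP; rewrite eqr_nat => /eqP N1.
have [s1_0 | s1_gt0] := posnP (\sum_(i <- s1) k ^ i)%N; first by left; rewrite s1_0.
by right; have -> : (\sum_(i <- s2) k ^ i = 0)%N by lia.
Qed.

Lemma sumr_nseq1 (N : nat) : \sum_(a <- nseq N (1 : rat)) a = N%:R.
Proof. by rewrite sumr_nseq mulr1. Qed.

Lemma lengths_nat (k : nat) x : inSr k%:R x ->
  Z_eq1 k%:R x /\ exists l0, forall l, Lset k%:R x l <-> l = l0.
Proof.
move=> [s ->]; rewrite sum_nat_pows; set N := (\sum_(i <- s) k ^ i)%N.
have ones z : is_fact k%:R N%:R z -> z = nseq N 1.
  move=> [z_atoms z_N].
  have z_1 : z = nseq (size z) 1.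
    by apply/all_pred1P/allP => a /z_atoms /nat_atoms ->.
  move: z_N; rewrite {1}z_1 sumr_nseq1 => /eqP; rewrite eqr_nat => /eqP size_z.
  by rewrite z_1 size_z.
have ones_fact : is_fact k%:R N%:R (nseq N 1).
  by split; [move=> a /nseqP [-> _]; apply/nat_atoms | apply: sumr_nseq1].
split; first by split=> [|z1 z2 /ones -> /ones ->]; [exists (nseq N 1) |].
exists N => l; split=> [[z [/ones -> <-]] | ->]; first exact: size_nseq.
by exists (nseq N 1); rewrite size_nseq.
Qed.

Lemma num_lt_den r : 0 < r -> r < 1 -> (nq r < dq r)%N.
Proof.
move=> r_gt0 r_lt1; have [_ d_gt0 _ r_nd] := num_den_spec r_gt0.
by rewrite -(ltr_nat rat) -r_nd gtr_pMl ?ltr0n.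
Qed.

Lemma den_lt_num r : 1 < r -> (dq r < nq r)%N.
Proof.
move=> r_gt1; have [_ d_gt0 _ r_nd] := num_den_spec (lt_trans ltr01 r_gt1).
by rewrite -(ltr_nat rat) -r_nd ltr_pMl ?ltr0n.
Qed.

Lemma fact_exists r x : atomic r -> inSr r x -> exists z, is_fact r x z.
Proof.
move=> at_r x_in; have [-> | x_neq0] := eqVneq x 0; last exact: at_r.
by exists [::]; split=> //; rewrite big_nil.
Qed.

(* If [r < 1] and [n(r) = 1], then [r ^+ i = r ^+ i.+1 + (d(r) - 1) * r ^+ i.+1]
   shows that no power of [r], hence no element of [S_r], is an atom; so
   atomicity forces [1 < n(r)]. *)
Lemma atomic_lt1_num_gt1 r : 0 < r -> r < 1 -> atomic r -> (1 < nq r)%N.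
Proof.
move=> r_gt0 r_lt1 at_r; have [n_gt0 d_gt0 _ r_nd] := num_den_spec r_gt0.
have n_lt_d := num_lt_den r_gt0 r_lt1.
rewrite ltn_neqAle n_gt0 andbT; apply/eqP => n1.
have no_atom i : ~ is_atom r (r ^+ i).
  move=> [_ [_ irreducible]].
  have inSr_rest : inSr r ((dq r).-1%:R * r ^+ i.+1).
    by exists (nseq (dq r).-1 i.+1); rewrite sumr_nseq.
  have [||] := irreducible _ _ (inSr_pow r i.+1) inSr_rest.
  - rewrite -[X in X + _]mul1r -mulrDl addrC natr1 prednK // exprSr mulrC -mulrA.
    by rewrite r_nd -n1 mulr1.
  - by move/eqP; rewrite expf_eq0 gt_eqF.
  - by move/eqP; rewrite mulf_eq0 expf_eq0 (gt_eqF r_gt0) andbF orbF pnatr_eq0; lia.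
have [[|a z] [z_atoms z_1]] := at_r 1 (inSr_pow r 0) (oner_neq0 _).
  by move/eqP: z_1; rewrite big_nil eq_sym oner_eq0.
have [i a_i] := atom_is_pow r_gt0 (z_atoms a (mem_head a z)).
by apply: (no_atom i); rewrite -a_i; apply: z_atoms; apply: mem_head.
Qed.

Lemma lengths_lt1 r x : 0 < r -> r < 1 -> atomic r -> Z_gt1 r x ->
  exists m, forall l, Lset r x l <-> exists k, l = (m + k * (dq r - nq r))%N.
Proof.
move=> r_gt0 r_lt1 at_r Zx; have [_ _ nd r_nd] := num_den_spec r_gt0.
have n_lt_d := num_lt_den r_gt0 r_lt1.
have n_gt1 := atomic_lt1_num_gt1 r_gt0 r_lt1 at_r.
have atoms := atoms_are_powers r_gt0 n_gt1 (ltn_trans n_gt1 n_lt_d).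
have [s1 [s2 [val1 val2 s1_s2]]] := Zgt1_exps atoms Zx.
have [|m L] := rep_lengths_down r_nd n_lt_d _ val1 val2 s1_s2; first by rewrite coprime_sym.
by exists m => l; apply: iff_trans (L l); apply: Lset_rep_length.
Qed.

Lemma lengths_gt1 r x : 1 < r -> ~ (exists k : nat, r = k%:R) -> inSr r x ->
  (dq r < nq r)%N /\ exists m T, forall l,
    Lset r x l <-> exists k, (k <= T)%N /\ l = (m + k * (nq r - dq r))%N.
Proof.
move=> r_gt1 r_nat [s0 x_s0]; have r_gt0 := lt_trans ltr01 r_gt1.
have [_ d_gt0 nd r_nd] := num_den_spec r_gt0.
have d_lt_n := den_lt_num r_gt1.
have d_gt1 : (1 < dq r)%N.
  rewrite ltn_neqAle d_gt0 andbT; apply/eqP => d1; apply: r_nat.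
  by exists (nq r); rewrite -r_nd -d1 mulr1.
have atoms := atoms_are_powers r_gt0 (ltn_trans d_gt1 d_lt_n) d_gt1.
have [m [T L]] := rep_lengths_up r_nd d_lt_n d_gt0 nd (esym x_s0).
by split=> //; exists m, T => l; apply: iff_trans (L l); apply: Lset_rep_length.
Qed.

Lemma minL_of_AP r x m q : (forall l, Lset r x l <-> exists k, l = (m + k * q)%N) ->
  is_minL r x m.
Proof.
move=> L; split=> [|l /L [k ->]]; last exact: leq_addr.
by apply/L; exists 0%N; rewrite mul0n addn0.
Qed.

Lemma minL_maxL_of_AP r x m q T :
  (forall l, Lset r x l <-> exists k, (k <= T)%N /\ l = (m + k * q)%N) ->
  is_minL r x m /\ is_maxL r x (m + T * q).
Proof.
move=> L; split; split.
- by apply/L; exists 0%N; rewrite mul0n addn0.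
- by move=> l /L [k [_ ->]]; apply: leq_addr.
- by apply/L; exists T.
- by move=> l /L [k [kT ->]]; rewrite leq_add2l leq_mul2r kT orbT.
Qed.

Lemma progression_bound (a b m T k : nat) : (b < a)%N ->
  (k%:R <= ((m + T * (a - b))%N%:R - m%:R) / (a%:R - b%:R) :> rat) = (k <= T)%N.
Proof.
move=> lt_ba; rewrite natrD addrAC subrr add0r -natrB ?(ltnW lt_ba) // natrM mulfK ?ler_nat //.
by rewrite pnatr_eq0 -lt0n subn_gt0.
Qed.

Lemma AP_of_single (L : nat -> Prop) l0 q : (forall l, L l <-> l = l0) -> is_AP L q.
Proof.
move=> L_l0; exists l0; left; exists 0%N => l; rewrite L_l0.
split=> [-> | [k [k0 ->]]]; first by exists 0%N; rewrite mul0n addn0.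
by move: k0; rewrite leqn0 => /eqP ->; rewrite mul0n addn0.
Qed.

Lemma single_length r x : ~ Z_gt1 r x -> (exists z, is_fact r x z) ->
  exists l0, forall l, Lset r x l <-> l = l0.
Proof.
move=> Z_le1 [z0 z0_x]; exists (size z0) => l; split=> [[z [z_x <-]] | ->]; last by exists z0.
have [z0_z | z0_z] := boolP (perm_eq z0 z); first by rewrite (perm_size z0_z).
by case: Z_le1; exists z0, z.
Qed.

Lemma lengths_AP r x : 0 < r -> atomic r -> inSr r x ->
  is_AP (Lset r x) (if (nq r <= dq r)%N then dq r - nq r else nq r - dq r)%N.
Proof.
move=> r_gt0 at_r x_in.
have [[k r_k] | r_nat] := classic (exists k : nat, r = k%:R).
  by subst r; have [_ [l0 L]] := lengths_nat x_in; apply: AP_of_single L.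
have [r_lt1 | r_gt1 | r_1] := ltrgtP r 1.
- rewrite ltnW ?num_lt_den //; have [Zx | Z_le1] := classic (Z_gt1 r x).
    by have [m L] := lengths_lt1 r_gt0 r_lt1 at_r Zx; exists m; right.
  by have [l0 L] := single_length Z_le1 (fact_exists at_r x_in); apply: AP_of_single L.
- have [d_lt_n [m [T L]]] := lengths_gt1 r_gt1 r_nat x_in.
  by rewrite leqNgt d_lt_n; exists m; left; exists T.
- by case: r_nat; exists 1%N.
Qed.

Theorem theorem3p3 (r : rat) (hr : 0 < r) (hat : atomic r) :
  (* (1) *)
  (r < 1 -> forall x, inSr r x -> Z_gt1 r x ->
     exists m, is_minL r x m /\
       forall l, Lset r x l <-> exists k, l = (m + k * (dq r - nq r))%N) /\
  (* (2) *)
  ((exists k : nat, r = k%:R) -> forall x, inSr r x ->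
     Z_eq1 r x /\ exists l0, forall l, Lset r x l <-> l = l0) /\
  (* (3) *)
  (1 < r -> ~ (exists k : nat, r = k%:R) -> forall x, inSr r x -> Z_gt1 r x ->
     exists m M, is_minL r x m /\ is_maxL r x M /\
       forall l, Lset r x l <->
         exists k : nat, (k%:R <= (M%:R - m%:R) / ((nq r)%:R - (dq r)%:R) :> rat)
                         /\ l = (m + k * (nq r - dq r))%N) /\
  (* in particular *)
  (forall x, inSr r x ->
     is_AP (Lset r x) (if (nq r <= dq r)%N then dq r - nq r else nq r - dq r)%N).
Proof.
split; [|split; [|split]].
- move=> r_lt1 x _ Zx; have [m L] := lengths_lt1 hr r_lt1 hat Zx.
  by exists m; split; first exact: minL_of_AP L.
- by move=> [k ->] x; apply: lengths_nat.
- move=> r_gt1 r_nat x x_in _; have [d_lt_n [m [T L]]] := lengths_gt1 r_gt1 r_nat x_in.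
  have [min_m max_M] := minL_maxL_of_AP L.
  exists m, (m + T * (nq r - dq r))%N; do 2!split=> //; move=> l.
  apply: iff_trans (L l) _; split=> [] [k [kT ->]]; exists k;
    by rewrite progression_bound in kT *.
- by move=> x; apply: lengths_AP.
Qed.
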